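(* Let $q$ be a prime power and use the setting of the context. Then $\mathcal C=\bigcup_{i=0}^{q^2+q}\mathcal G_i$ is a $(6,(q^3-1)(q^2+q+1),4;3)_q$ constant-dimension subspace code; that is, it consists of $(q^3-1)(q^2+q+1)$ planes of ${\rm PG}(5,q)$, any two distinct of which meet in at most one point.
   Context: In ${\rm PG}(5,q)$ points are row vectors ${\bf X}=(X_1,\dots,X_6)$; write $X=(X_1,X_2,X_3)$, $Y=(X_4,X_5,X_6)$. Let $\pi_1$ be the plane $X_1=X_2=X_3=0$ and $\pi_2$ the plane $X_4=X_5=X_6=0$. Let $A$ be a Singer cycle of ${\rm GL}(3,q)$, i.e. a $3\times3$ matrix over ${\rm GF}(q)$ of multiplicative order $q^3-1$. For $0\le i\le q^2+q$ let $\mathcal Q_i$ be the quadric of ${\rm PG}(5,q)$ with quadratic form ${\bf Q}_i({\bf X})=XA^iY^T$; each $\mathcal Q_i$ is a non-degenerate hyperbolic quadric $\mathcal Q^+(5,q)$ containing $\pi_1$ and $\pi_2$, and the $\mathcal Q_i$ are pairwise distinct. The planes on $\mathcal Q^+(5,q)$ fall into two classes of size $(q+1)(q^2+1)$ (two planes of the same class meet in exactly one point; planes of different classes are disjoint or meet in a line); since $\pi_1\cap\pi_2=\emptyset$, $\pi_1$ and $\pi_2$ lie in different classes. Let $\mathcal G_i$ be the set of the $q^3-1$ planes of $\mathcal Q_i$ belonging to the same class as $\pi_1$, distinct from $\pi_1$ and disjoint from $\pi_2$. An $(n,M,4;3)_q$ constant-dimension code is a set of $M$ planes of ${\rm PG}(n-1,q)$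 pairwise meeting in at most a point. *)

From HB Require Import structures.
From mathcomp Require Import all_boot all_order all_algebra all_fingroup all_field.
Set Implicit Arguments. Unset Strict Implicit. Unset Printing Implicit Defensive.
Import GRing.Theory.
Local Open Scope ring_scope.

(* Points of PG(5,q) = nonzero row vectors of F^(3+3); subspaces of F^6 are
   represented canonically by their generating matrix <<M>>%MS (square 6x6),
   so that two subspaces are equal iff their canonical matrices are equal.
   A plane of PG(5,q) is a 3-dimensional vector subspace. *)

Definition singer_cycle (F : finFieldType) (A : 'M[F]_3) : Prop :=
  A ^+ (#|F| ^ 3 - 1) = 1 /\
  forall k : nat, (0 < k)%N -> (k < #|F| ^ 3 - 1)%N -> A ^+ k != 1.

Definition qform (F : finFieldType) (A : 'M[F]_3) (i : nat)
  (v : 'rV[F]_(3 + 3)) : F :=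
  (lsubmx v *m A ^+ i *m (rsubmx v)^T) 0 0.

Definition is_subspace (F : finFieldType) (U : 'M[F]_(3 + 3)) : bool :=
  U == <<U>>%MS.

Definition is_plane (F : finFieldType) (U : 'M[F]_(3 + 3)) : bool :=
  is_subspace U && (\rank U == 3)%N.

(* pi_1 : X_1 = X_2 = X_3 = 0 ;  pi_2 : X_4 = X_5 = X_6 = 0 *)
Definition pi1 (F : finFieldType) : 'M[F]_(3 + 3) :=
  <<row_mx (0 : 'M[F]_3) (1%:M : 'M[F]_3)>>%MS.
Definition pi2 (F : finFieldType) : 'M[F]_(3 + 3) :=
  <<row_mx (1%:M : 'M[F]_3) (0 : 'M[F]_3)>>%MS.

Definition on_quadric (F : finFieldType) (A : 'M[F]_3) (i : nat)
  (U : 'M[F]_(3 + 3)) : bool :=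
  [forall v : 'rV[F]_(3 + 3), (v <= U)%MS ==> (qform A i v == 0)].

(* Two planes of Q^+(5,q) are in the same class iff their intersection has
   odd (vector) dimension, i.e. they meet in a point or coincide. *)
Definition same_class (F : finFieldType) (U V : 'M[F]_(3 + 3)) : bool :=
  odd (\rank (U :&: V)%MS).

Definition G (F : finFieldType) (A : 'M[F]_3) (i : nat) : {set 'M[F]_(3 + 3)} :=
  [set U : 'M[F]_(3 + 3) | [&& is_plane U, on_quadric A i U,
     same_class U (pi1 F), U != pi1 F & \rank (U :&: pi2 F)%MS == 0%N]].

Definition code (F : finFieldType) (A : 'M[F]_3) : {set 'M[F]_(3 + 3)} :=
  \bigcup_(i < #|F| ^ 2 + #|F| + 1) G A i.

(* A plane disjoint from pi_2 is the graph {(Y M, Y)} of a unique 3x3 matrix M,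
   and the graphs of M and M' meet in dimension 3 - rank (M - M').  The graph
   of M lies on Q_i iff M A^i is alternating, i.e. M = [s]x A^-i for the
   cross-product matrix [s]x of some s; it differs from pi_1 iff s != 0, and
   then it meets pi_1 in a point.  So C is parametrised by the pairs (i, s)
   with s != 0, and it remains to show rank ([s]x A^-i - [t]x A^-j) >= 2 for
   distinct pairs.  For i = j this is rank [s - t]x = 2.  Otherwise, with
   0 < k = j - i < q^2 + q + 1, a kernel W of [s]x A^k - [t]x of dimension
   >= 2 would make x, x (A^k)^T and s dependent for every x in W, which
   forces A^k to have an eigenvalue in F.  But A^k - a lies in F[A], whose
   nonzero elements are the q^3 - 1 powers of A, so it is invertible unless
   A^k = a; and then A^(k (q - 1)) = a^(q - 1) = 1 with
   0 < k (q - 1) < q^3 - 1. *)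

From HB Require Import structures.
From mathcomp Require Import all_boot all_order all_algebra all_fingroup all_field.
From mathcomp Require Import ring zify.
Import GRing.Theory.
Set Implicit Arguments. Unset Strict Implicit.
Local Open Scope ring_scope.

Section AlternatingForms.
Variables (F : fieldType) (n : nat) (S : 'M[F]_n).

Local Notation form x y := ((x *m S *m y^T) 0 0).
Local Notation e i := (delta_mx 0 i : 'rV[F]_n).

Lemma form_delta i j : form (e i) (e j) = S i j.
Proof. by rewrite -rowE trmx_delta -colE !mxE. Qed.

Lemma formDD (x y : 'rV[F]_n) :
  form (x + y) (x + y) = form x x + form x y + form y x + form y y.
Proof. by rewrite linearD /= !mulmxDl !mulmxDr !mxE !addrA. Qed.

Hypothesis S_alt : forall x : 'rV[F]_n, form x x = 0.

Lemma alternating_diag i : S i i = 0.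
Proof. by rewrite -form_delta S_alt. Qed.

Lemma alternating_skew i j : S j i = - S i j.
Proof.
have /eqP := S_alt (e i + e j).
by rewrite formDD !S_alt addr0 add0r !form_delta addrC addr_eq0 => /eqP.
Qed.

End AlternatingForms.

Lemma rank_le1_minor (F : fieldType) m n (X : 'M[F]_(m, n)) i1 i2 j1 j2 :
  (\rank X <= 1)%N -> X i1 j1 * X i2 j2 = X i1 j2 * X i2 j1.
Proof.
move=> rX; pose f (a : 'I_2) := if a == 0 then i1 else i2.
pose g (b : 'I_2) := if b == 0 then j1 else j2.
have rY : (\rank (mxsub f g X) <= 1)%N.
  have -> : mxsub f g X = rowsub f 1%:M *m X *m colsub g 1%:M.
    by rewrite mul_rowsub_mx mul1mx mulmx_colsub mulmx1; apply/matrixP => a b; rewrite !mxE.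
  by rewrite (leq_trans (mxrankM_maxl _ _)) // (leq_trans (mxrankM_maxr _ _)).
have : \det (mxsub f g X) = 0.
  apply/eqP; apply: contraLR rY; rewrite -unitfE -unitmxE -row_free_unit.
  by rewrite /row_free => /eqP ->.
rewrite (expand_det_row _ 0) !big_ord_recl big_ord0 /cofactor !det_mx11 !mxE /=.
rewrite /f /g /bump /= => det0; apply/eqP; rewrite -subr_eq0 -det0; apply/eqP; ring.
Qed.

Lemma rank_addsmx_notin (F : fieldType) m n (V : 'M[F]_(m, n)) (w : 'rV[F]_n) :
  ~~ (w <= V)%MS -> (\rank V < \rank (V + w)%MS)%N.
Proof. by move=> nwV; apply: rank_ltmx; rewrite ltmxE addsmxSl addsmx_sub submx_refl. Qed.

(* [ring] identifies two entries [M i j] only if their ordinal indices are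
   syntactically equal; [mx3_expand] rewrites every entry as [mx_at M a b]
   with closed numerals [a], [b]. *)
Definition mx_at (R : Type) m n (M : 'M[R]_(m.+1, n.+1)) (a b : nat) := M (inord a) (inord b).
Arguments mx_at : simpl never.

Lemma mx_atE (R : Type) m n (M : 'M[R]_(m.+1, n.+1)) i j : M i j = mx_at M i j.
Proof. by rewrite /mx_at !inord_val. Qed.

Ltac mx3_expand :=
  rewrite ?(mxE, big_ord_recl, big_ord0) /= ?mx_atE /bump /=;
  repeat match goal with |- context [mx_at ?M ?a ?b] =>
    let a' := eval vm_compute in a in let b' := eval vm_compute in b in
    progress change (mx_at M a b) with (mx_at M a' b') end.

Lemma det_mx33 (R : comPzRingType) (M : 'M[R]_3) : \det M =
  M 0 0 * M 1 1 * M 2 2 - M 0 0 * M 1 2 * M 2 1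
  - M 0 1 * M 1 0 * M 2 2 + M 0 1 * M 1 2 * M 2 0
  + M 0 2 * M 1 0 * M 2 1 - M 0 2 * M 1 1 * M 2 0.
Proof.
rewrite (expand_det_row _ 0) !big_ord_recl big_ord0 /cofactor.
rewrite !(expand_det_row _ 0) !big_ord_recl !big_ord0 /cofactor !det_mx11.
mx3_expand; ring.
Qed.

Ltac mx3_ring := rewrite ?det_mx33; mx3_expand; ring.

Section CrossProductMatrix.
Variable F : fieldType.

Definition vec3 (a b c : F) : 'rV[F]_3 :=
  \row_(j < 3) (if (j : nat) == 0%N then a else if (j : nat) == 1%N then b else c).
Definition rows3 (x y z : 'rV[F]_3) : 'M[F]_3 :=
  \matrix_(i < 3, j < 3)
    (if (i : nat) == 0%N then x 0 j else if (i : nat) == 1%N then y 0 j else z 0 j).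
Definition crossmx (s : 'rV[F]_3) : 'M[F]_3 :=
  \matrix_(i < 3, j < 3)
   match (i : nat), (j : nat) with
   | 0, 1 => s 0 2 | 0, 2 => - s 0 1 | 1, 0 => - s 0 2
   | 1, 2 => s 0 0 | 2, 0 => s 0 1 | 2, 1 => - s 0 0 | _, _ => 0 end.

Lemma crossmx_form (s x y : 'rV[F]_3) :
  (x *m crossmx s *m y^T) 0 0 = \det (rows3 x y s).
Proof. mx3_ring. Qed.

Lemma crossmx_alt (s x : 'rV[F]_3) : (x *m crossmx s *m x^T) 0 0 = 0.
Proof.
by rewrite crossmx_form (determinant_alternate (i1 := 0) (i2 := 1)) // => j; rewrite !mxE.
Qed.

Lemma crossmxB (s t : 'rV[F]_3) : crossmx s - crossmx t = crossmx (s - t).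
Proof.
apply/matrixP => i j; rewrite !mxE.
by case: i => [[|[|[|i]]] Hi] //; case: j => [[|[|[|j]]] Hj] //=;
  rewrite ?mxE ?subrr ?opprB ?opprK // addrC.
Qed.

Lemma crossmx0 : crossmx 0 = 0.
Proof.
apply/matrixP => i j; rewrite !mxE.
by case: i => [[|[|[|i]]] Hi] //; case: j => [[|[|[|j]]] Hj] //=; rewrite ?mxE ?oppr0.
Qed.

Lemma alternating_crossmx (S : 'M[F]_3) :
  (forall x : 'rV[F]_3, (x *m S *m x^T) 0 0 = 0) ->
  S = crossmx (vec3 (S 1 2) (S 2 0) (S 0 1)).
Proof.
move=> S_alt; apply/matrixP => i j.
move: (alternating_diag S_alt 0) (alternating_diag S_alt 1) (alternating_diag S_alt 2).
move: (alternating_skew S_alt 0 1) (alternating_skew S_alt 2 0) (alternating_skew S_alt 1 2).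
rewrite !mxE; case: i => [[|[|[|i]]] Hi] //; case: j => [[|[|[|j]]] Hj] //=.
all: by mx3_expand => k01 k20 k12 d0 d1 d2; rewrite ?k01 ?k20 ?k12 ?d0 ?d1 ?d2.
Qed.

Lemma rank_crossmx (u : 'rV[F]_3) : u != 0 -> \rank (crossmx u) = 2%N.
Proof.
move=> nz_u; apply/eqP; rewrite eqn_leq; apply/andP; split.
  rewrite -ltnS ltn_neqAle rank_leq_col andbT; apply/negP => /eqP full.
  have : crossmx u \in unitmx by rewrite -row_free_unit /row_free full.
  by rewrite unitmxE unitfE det_mx33 !mxE /= => /negP; apply; apply/eqP; ring.
rewrite ltnNge; apply/negP => le1; apply/negP: nz_u; rewrite negbK.
move: (rank_le1_minor 1 2 1 2 le1) (rank_le1_minor 2 0 2 0 le1) (rank_le1_minor 0 1 0 1 le1).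
have sq0 (a : F) : (0 * 0 = a * - a) -> a = 0.
  by rewrite mul0r mulrN => /eqP; rewrite eq_sym oppr_eq0 mulf_eq0 orbb => /eqP.
mx3_expand => /sq0 u0 /sq0 u1 /sq0 u2.
apply/eqP/rowP => j; rewrite mxE mx_atE.
by case: j => [[|[|[|j]]] Hj] //=.
Qed.

End CrossProductMatrix.

Section EigenvalueCriterion.
Variable F : fieldType.

Local Notation e1 := (vec3 1 0 0).
Local Notation e2 := (vec3 0 1 0).
Local Notation e3 := (vec3 0 0 1).

Lemma vec3_mulmx a b c (x y z : 'rV[F]_3) :
  vec3 a b c *m rows3 x y z = a *: x + b *: y + c *: z.
Proof. apply/rowP => j; mx3_expand; ring. Qed.

Lemma rows3_mulmx (x y z : 'rV[F]_3) (D : 'M[F]_3) :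
  rows3 (x *m D) (y *m D) (z *m D) = rows3 x y z *m D.
Proof.
apply/matrixP => i j; rewrite !mxE.
by case: i => [[|[|[|i]]] Hi] //=; apply: eq_bigr => k _; rewrite !mxE.
Qed.

Lemma det_conj_sub_scalar (D G : 'M[F]_3) a : D \in unitmx ->
  \det (invmx D *m G *m D - a%:M) = \det (G - a%:M).
Proof.
move=> uD; have -> : invmx D *m G *m D - a%:M = invmx D *m (G - a%:M) *m D.
  by rewrite mulmxBr mulmxBl mul_mx_scalar -scalemxAl mulVmx // scalemx1.
by rewrite !det_mulmx det_inv mulrAC mulVf ?mul1r // -unitfE -unitmxE.
Qed.

Lemma vec3_mulmxE a b c (G : 'M[F]_3) j :
  (vec3 a b c *m G) 0 j = a * G 0 j + b * G 1 j + c * G 2 j.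
Proof. mx3_ring. Qed.

Lemma det_rows3_e3 (x y : 'rV[F]_3) :
  \det (rows3 x y e3) = x 0 0 * y 0 1 - x 0 1 * y 0 0.
Proof. mx3_ring. Qed.

Definition dependent3 (x y z : 'rV[F]_3) : Prop := \det (rows3 x y z) = 0.

Local Notation dep G v := (dependent3 v (v *m G) e3).

(* The conditions make the upper-left 2x2 block of G scalar. *)
Lemma eigen_std_pair (G : 'M[F]_3) :
  dep G e1 -> dep G e2 -> dep G (vec3 1 1 0) -> \det (G - (G 0 0)%:M) = 0.
Proof.
rewrite /dependent3 !det_rows3_e3 !vec3_mulmxE !mxE /= => h1 h2 h3.
have g01 : G 0 1 = 0 by rewrite -h1; ring.
have g10 : G 1 0 = 0 by apply/eqP; rewrite -oppr_eq0; apply/eqP; rewrite -h2; ring.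
have g11 : G 1 1 = G 0 0.
  by apply/eqP; rewrite -subr_eq0; apply/eqP; rewrite -h3 g01 g10; ring.
rewrite det_mx33 !mxE /= g01 g10 g11; ring.
Qed.

(* The conditions make e2 an eigenvector of G acting on columns. *)
Lemma eigen_std_axis (G : 'M[F]_3) :
  dep G e1 -> dep G (vec3 1 0 1) -> \det (G - (G 1 1)%:M) = 0.
Proof.
rewrite /dependent3 !det_rows3_e3 !vec3_mulmxE !mxE /= => h1 h2.
have g01 : G 0 1 = 0 by rewrite -h1; ring.
have g21 : G 2 1 = 0 by rewrite -h2 g01; ring.
rewrite det_mx33 !mxE /= g01 g21; ring.
Qed.

Lemma eigen_of_dependent_basis (C : 'M[F]_3) (w1 w2 s : 'rV[F]_3) :
  \det (rows3 w1 w2 s) != 0 ->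
  let dep x := dependent3 x (x *m C) s in
  [/\ dep w1, dep w2 & dep (w1 + w2)] \/ dep w1 /\ dep (w1 + s) ->
  exists a, \det (C - a%:M) = 0.
Proof.
set D := rows3 w1 w2 s => nzD dep.
have uD : D \in unitmx by rewrite unitmxE unitfE.
pose G := D *m C *m invmx D.
have in_basis a b c : vec3 a b c *m D = a *: w1 + b *: w2 + c *: s by exact: vec3_mulmx.
have D3 : e3 *m D = s by rewrite in_basis scale1r !scale0r !add0r.
have std_dep v : dep (v *m D) -> dependent3 v (v *m G) e3.
  rewrite /dep /dependent3 -D3 -mulmxA -[D *m C](mulmxKV uD) -/G mulmxA rows3_mulmx det_mulmx.
  by move/eqP; rewrite mulf_eq0 (negPf nzD) orbF => /eqP.
have eigenG a : \det (G - a%:M) = 0 -> \det (C - a%:M) = 0.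
  by rewrite -(det_conj_sub_scalar _ a uD) /G !mulmxA mulVmx // mul1mx mulmxKV.
have D1 : e1 *m D = w1 by rewrite in_basis scale1r !scale0r !addr0.
have D2 : e2 *m D = w2 by rewrite in_basis scale1r !scale0r add0r addr0.
have D12 : vec3 1 1 0 *m D = w1 + w2 by rewrite in_basis !scale1r scale0r addr0.
have D13 : vec3 1 0 1 *m D = w1 + s by rewrite in_basis !scale1r scale0r addr0.
case=> [[h1 h2 h12] | [h1 h13]].
- exists (G 0 0); apply/eigenG/eigen_std_pair; apply: std_dep;
    by rewrite ?D1 ?D2 ?D12.
- exists (G 1 1); apply/eigenG/eigen_std_axis; apply: std_dep;
    by rewrite ?D1 ?D13.
Qed.

Lemma rows3_unit (x y z : 'rV[F]_3) :
  (3 <= \rank (x + y + z)%MS)%N -> \det (rows3 x y z) != 0.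
Proof.
move=> r3; rewrite -unitfE -unitmxE -row_free_unit /row_free eqn_leq rank_leq_col.
apply: leq_trans r3 (mxrankS _).
have row_in (i : 'I_3) (w : 'rV[F]_3) : row i (rows3 x y z) = w -> (w <= rows3 x y z)%MS.
  by move=> <-; apply: row_sub.
rewrite !addsmx_sub -andbA; apply/and3P; split.
- by apply: (row_in 0); apply/rowP => j; rewrite !mxE.
- by apply: (row_in 1); apply/rowP => j; rewrite !mxE.
- by apply: (row_in 2); apply/rowP => j; rewrite !mxE.
Qed.

Lemma adapted_basis m (W : 'M[F]_(m, 3)) (s : 'rV[F]_3) :
  (2 <= \rank W)%N -> s != 0 ->
  exists w1 w2, [/\ (w1 <= W)%MS, \det (rows3 w1 w2 s) != 0 & (w2 <= W)%MS || (s <= W)%MS].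
Proof.
move=> rW nz_s; have rs : \rank s = 1%N by rewrite rank_rV nz_s.
have /row_subPn [i nWis] : ~~ (W <= s)%MS.
  by apply: contraL rW => /mxrankS; rewrite rs -ltnNge => /leq_ltn_trans->.
set w1 := row i W in nWis.
have r2 : \rank (s + w1)%MS = 2%N.
  apply/eqP; rewrite eqn_leq; apply/andP; split.
    by rewrite (leq_trans (mxrank_adds_leqif _ _)) // rs add1n ltnS rank_leq_row.
  by have := rank_addsmx_notin nWis; rewrite rs.
have [w2 nw2 Ww2s] : exists2 w2 : 'rV[F]_3, ~~ (w2 <= s + w1)%MS & (w2 <= W)%MS || (s <= W)%MS.
  case sW: (s <= W)%MS; last first.
    have /row_subPn [j nWj] : ~~ (W <= s + w1)%MS.
      apply: contraFN sW => Wsw1; apply: submx_trans (addsmxSl s w1) _.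
      by rewrite -(mxrank_leqif_sup Wsw1).2 eqn_leq mxrankS // r2 rW.
    by exists (row j W); rewrite ?row_sub.
  have /row_subPn [j nj] : ~~ ((1%:M : 'M[F]_3) <= s + w1)%MS.
    by apply/negP => /mxrankS; rewrite mxrank1 r2.
  by exists (row j 1%:M); rewrite ?orbT.
exists w1, w2; split => //; first exact: row_sub.
apply: rows3_unit; rewrite addsmxC addsmxA.
by have := rank_addsmx_notin nw2; rewrite r2.
Qed.

Lemma eigen_of_dependent m (W : 'M[F]_(m, 3)) (C : 'M[F]_3) (s : 'rV[F]_3) :
  (2 <= \rank W)%N -> s != 0 ->
  (forall x, (x <= W)%MS -> dependent3 x (x *m C) s) ->
  exists a, \det (C - a%:M) = 0.
Proof.
move=> rW nz_s depW; have [w1 [w2 [Ww1 nzD /orP Ww2s]]] := adapted_basis rW nz_s.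
apply: (eigen_of_dependent_basis nzD).
by case: Ww2s => [Ww2 | Ws]; [left | right]; split; apply: depW; rewrite ?addmx_sub.
Qed.

Lemma crossmx_mul_sub_rank (B : 'M[F]_3) (s t : 'rV[F]_3) : s != 0 ->
  (forall a, \det (B - a%:M) != 0) -> (2 <= \rank (crossmx s *m B - crossmx t)%R)%N.
Proof.
move=> nz_s noeigB; rewrite ltnNge; apply/negP => le1.
set X := crossmx s *m B - crossmx t in le1.
have rW : (2 <= \rank (kermx X))%N by rewrite mxrank_ker; move: le1; clear; lia.
have [a] : exists a, \det (B^T - a%:M) = 0.
  (* x [s]x B x^T = x [t]x x^T = 0 for x in the kernel *)
  apply: (eigen_of_dependent rW nz_s) => x /sub_kermxP Xx0.
  have xB : x *m crossmx s *m B = x *m crossmx t.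
    by apply/eqP; rewrite -subr_eq0 -mulmxA -mulmxBr Xx0.
  by rewrite /dependent3 -crossmx_form trmx_mul trmxK !mulmxA xB crossmx_alt.
by move: (noeigB a); rewrite -det_tr linearB /= tr_scalar_mx => /eqP.
Qed.

End EigenvalueCriterion.


Section GraphSubspaces.
Variables (F : fieldType) (n : nat).

Definition graphmx (M : 'M[F]_n) : 'M[F]_(n + n) := <<row_mx M 1%:M>>%MS.

Local Notation Yzero := (<<row_mx (1%:M : 'M[F]_n) 0>>%MS).

Lemma sub_graphmx m (v : 'M[F]_(m, n + n)) M :
  (v <= graphmx M)%MS -> v = rsubmx v *m row_mx M 1%:M.
Proof.
by rewrite /graphmx genmxE => /submxP [D ->]; rewrite mul_mx_row row_mxKr !mulmx1 mul_mx_row mulmx1.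
Qed.

Lemma rank_graphmx M : \rank (graphmx M) = n.
Proof.
rewrite /graphmx genmxE; apply/eqP; rewrite eqn_leq rank_leq_row /=.
have := mxrankM_maxl (row_mx M 1%:M) (col_mx 0 1%:M).
by rewrite mul_row_col mulmx0 mulmx1 add0r mxrank1.
Qed.

Lemma rank_graphmx_cap M M' :
  \rank (graphmx M :&: graphmx M')%MS = (n - \rank (M - M')%R)%N.
Proof.
set K := kermx (M - M').
have -> : (graphmx M :&: graphmx M' :=: K *m row_mx M 1%:M)%MS.
  apply/eqmxP/andP; split.
    set v := (graphmx M :&: graphmx M')%MS.
    have vM : v = rsubmx v *m row_mx M 1%:M := sub_graphmx (capmxSl _ _).
    have vM' : v = rsubmx v *m row_mx M' 1%:M := sub_graphmx (capmxSr _ _).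
    have /submxMr vK : (rsubmx v <= K)%MS.
      apply/sub_kermxP; rewrite mulmxBr; apply/eqP; rewrite subr_eq0; apply/eqP.
      by move: (congr1 lsubmx vM) (congr1 lsubmx vM'); rewrite !mul_mx_row !row_mxKl => <- <-.
    by rewrite {1}vM vK.
  have KMM' : K *m row_mx M 1%:M = K *m row_mx M' 1%:M.
    rewrite !mul_mx_row; congr row_mx.
    by apply/eqP; rewrite -subr_eq0 -mulmxBr; apply/eqP; apply: mulmx_ker.
  by rewrite sub_capmx !genmxE submxMl KMM' submxMl.
rewrite mxrankMfree ?mxrank_ker // /row_free -genmxE.
by have := rank_graphmx M; rewrite /graphmx => ->.
Qed.

Lemma graphmx_inj : injective graphmx.
Proof.
move=> M M' eqMM'; apply/eqP; rewrite -subr_eq0 -mxrank_eq0.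
have := rank_graphmx_cap M M'; rewrite eqMM' (capmx_idPl (submx_refl _)) rank_graphmx.
move: (rank_leq_row (M - M')%R); set r := \rank _; lia.
Qed.

Lemma graphmx_cap_Yzero M : \rank (graphmx M :&: Yzero)%MS = 0%N.
Proof.
apply/eqP; rewrite mxrank_eq0 -submx0.
set v := (graphmx M :&: Yzero)%MS.
have vM : v = rsubmx v *m row_mx M 1%:M := sub_graphmx (capmxSl _ _).
have : (v <= Yzero)%MS by apply: capmxSr.
rewrite genmxE => /submxP [D vD].
have v2 : rsubmx v = 0 by rewrite vD mul_mx_row mulmx0 row_mxKr.
by rewrite vM v2 mul0mx.
Qed.

Lemma graphmxP (U : 'M[F]_(n + n)) :
  U = <<U>>%MS -> \rank U = n -> \rank (U :&: Yzero)%MS = 0%N ->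
  exists M, U = graphmx M.
Proof.
move=> eqU rU capU0.
have kerU2 : kermx (rsubmx U) *m U = 0.
  apply/eqP; rewrite -mxrank_eq0 -leqn0 -capU0 mxrankS // sub_capmx submxMl /= genmxE.
  have -> : kermx (rsubmx U) *m U = kermx (rsubmx U) *m lsubmx U *m row_mx 1%:M 0.
    by rewrite -{2}[U]hsubmxK !mul_mx_row mulmx_ker mulmx1 mulmx0.
  exact: submxMl.
have rU2 : \rank (rsubmx U) = n.
  have /mxrankS : (kermx (rsubmx U) <= kermx U)%MS by apply/sub_kermxP.
  rewrite !mxrank_ker rU; have := rank_leq_col (rsubmx U); set r := \rank _; lia.
have /row_fullP [P PU2] : row_full (rsubmx U) by rewrite /row_full rU2.
exists (P *m lsubmx U).
have sub : (graphmx (P *m lsubmx U) <= U)%MS.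
  by rewrite /graphmx genmxE -PU2 -mul_mx_row hsubmxK submxMl.
have /eqmxP eqGU : (graphmx (P *m lsubmx U) == U)%MS.
  by rewrite -(mxrank_leqif_eq sub).2 rank_graphmx rU.
by rewrite {1}eqU -(eq_genmx eqGU) genmx_id.
Qed.

End GraphSubspaces.


Section SingerCycle.
Variables (F : finFieldType) (A : 'M[F]_3).
Hypothesis singerA : singer_cycle A.

Local Notation q := #|F|.
Local Notation N := (q ^ 3 - 1)%N.

Let q_gt1 : (1 < q)%N := card_finNzRing_gt1 F.

Let N_gt0 : (0 < N)%N.
Proof. by have := q_gt1; nia. Qed.

Lemma singer_unit : A \is a GRing.unit.
Proof.
case: singerA => AN _; apply/unitrP; exists (A ^+ N.-1).
by rewrite -exprS -exprSr prednK ?AN.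
Qed.

Lemma singer_expr_inj : injective (fun m : 'I_N => A ^+ m).
Proof.
have neq (i j : nat) : (i < j)%N -> (j < N)%N -> A ^+ i != A ^+ j.
  move=> ltij ltjN; have [_ minN] := singerA.
  have := minN (j - i)%N; rewrite subn_gt0 ltij (leq_ltn_trans (leq_subr i j) ltjN).
  move=> /(_ isT isT); apply: contra => /eqP eqAij.
  apply/eqP/(mulrI (unitrX i singer_unit)).
  by rewrite -exprD subnKC ?(ltnW ltij) // mulr1.
move=> i j /= eqA; apply: val_inj => /=.
case: (ltngtP i j) => // lt; [move: (neq _ _ lt (ltn_ord j)) | move: (neq _ _ lt (ltn_ord i))];
  by rewrite eqA eqxx.
Qed.

Definition FA : {set 'M[F]_3} :=
  [set B | (B \in powers_mx A (degree_mxminpoly A))%MS].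

Lemma horner_mx_FA p : horner_mx A p \in FA.
Proof. by rewrite inE horner_mx_mem. Qed.

Lemma card_FA : (#|FA| <= q ^ 3)%N.
Proof.
pose f (u : 'rV[F]_(degree_mxminpoly A)) := horner_mx A (rVpoly u).
have /subset_leq_card : FA \subset f @: setT.
  apply/subsetP => B; rewrite inE => FAB; apply/imsetP.
  exists (mxvec B *m pinvmx (powers_mx A (degree_mxminpoly A))); first by rewrite inE.
  by rewrite /f -[rVpoly _]/(mx_inv_horner A B) mx_inv_hornerK.
move/leq_trans; apply; apply: leq_trans (leq_imset_card _ _) _.
rewrite cardsT card_mx mul1n leq_pexp2l ?(ltnW q_gt1) //.
have /dvdp_leq : mxminpoly A %| char_poly A := mxminpoly_dvd_char A.
by rewrite size_mxminpoly size_char_poly ltnS -size_poly_eq0 size_char_poly; apply.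
Qed.

(* F[A] has at most q^3 elements, among them 0 and the q^3 - 1 powers of A. *)
Lemma FA_unit B : B \in FA -> B != 0 -> B \is a GRing.unit.
Proof.
pose P := [set A ^+ m | m : 'I_N].
have unitP C : C \in P -> C \is a GRing.unit.
  by case/imsetP => m _ ->; apply: unitrX singer_unit.
have PFA : P \subset FA.
  apply/subsetP => _ /imsetP [m _ ->].
  by have := horner_mx_FA 'X^m; rewrite rmorphXn /= horner_mx_X.
have P0 : 0 \notin P by apply/negP => /unitP; rewrite unitr0.
have eqFA : FA = 0 |: P.
  apply/esym/eqP; rewrite eqEcard subUset sub1set inE linear0 sub0mx PFA.
  rewrite cardsU1 P0 card_imset ?card_ord; last exact: singer_expr_inj.
  by have := card_FA; have := N_gt0; lia.
by rewrite eqFA !inE => /orP [-> | /unitP].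
Qed.

Lemma singer_expr_neq_scalar k (a : F) :
  (0 < k)%N -> (k < q ^ 2 + q + 1)%N -> A ^+ k != a%:M.
Proof.
move=> k_gt0 k_lt; apply/eqP => Ak.
(* A^(k (q - 1)) = a^(q - 1) = 1 contradicts the order of A *)
have a_nz : a != 0.
  by apply: contraTneq (unitrX k singer_unit) => a0; rewrite Ak a0 raddf0 unitr0.
have aq : a ^+ q.-1 = 1.
  by apply: (mulfI a_nz); rewrite mulr1 -exprS prednK ?expf_card // ltnW.
have kq_gt0 : (0 < k * q.-1)%N by rewrite muln_gt0 k_gt0 -subn1 subn_gt0.
have kq_lt : (k * q.-1 < N)%N by rewrite -subn1; nia.
have [_ minN] := singerA.
by have := minN _ kq_gt0 kq_lt; rewrite exprM Ak -rmorphXn /= aq rmorph1 eqxx.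
Qed.

Lemma singer_expr_no_eigenvalue k (a : F) :
  (0 < k)%N -> (k < q ^ 2 + q + 1)%N -> \det (A ^+ k - a%:M) != 0.
Proof.
move=> k_gt0 k_lt; rewrite -unitfE -unitmxE; apply: FA_unit.
  by have := horner_mx_FA ('X^k - a%:P); rewrite rmorphB rmorphXn /= horner_mx_X horner_mx_C.
by rewrite subr_eq0 singer_expr_neq_scalar.
Qed.

Local Notation n := (q ^ 2 + q + 1)%N.

Lemma pi1_graphmx : pi1 F = graphmx 0.
Proof. by []. Qed.

Definition code_mx (i : nat) (s : 'rV[F]_3) : 'M[F]_3 := crossmx s *m A ^- i.

Lemma code_mxK i s : code_mx i s *m A ^+ i = crossmx s.
Proof. by rewrite /code_mx -mulmxA mulVmx ?mulmx1 // unitrX // singer_unit. Qed.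

Lemma rank_code_mx i s : s != 0 -> \rank (code_mx i s) = 2%N.
Proof.
by move=> nz_s; rewrite mxrankMfree ?rank_crossmx // row_free_unit unitrV unitrX ?singer_unit.
Qed.

Lemma code_mx_sub_rank (i j : 'I_n) s t : s != 0 -> t != 0 ->
  (i, s) != (j, t) -> (2 <= \rank (code_mx i s - code_mx j t)%R)%N.
Proof.
wlog le_ij : i j s t / (i <= j)%N.
  move=> wlog nz_s nz_t neq; case: (leqP i j) => [|/ltnW] le; first exact: wlog.
  by rewrite -mxrank_opp opprB wlog // eq_sym.
move=> nz_s _ neq.
have unitAj : row_free (A ^+ j) by rewrite row_free_unit unitrX ?singer_unit.
rewrite -(mxrankMfree _ unitAj) mulmxBl code_mxK.
case: (ltngtP i j) le_ij => // [lt_ij | eq_ij] _.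
  have -> : A ^+ j = A ^+ i *m A ^+ (j - i) by rewrite -{1}(subnKC (ltnW lt_ij)) exprD.
  rewrite mulmxA code_mxK.
  apply: crossmx_mul_sub_rank => // a; apply: singer_expr_no_eigenvalue; first by rewrite subn_gt0.
  exact: leq_ltn_trans (leq_subr i j) (ltn_ord j).
rewrite -eq_ij code_mxK crossmxB rank_crossmx // subr_eq0.
by apply: contraNneq neq => ->; rewrite (val_inj eq_ij).
Qed.

Lemma code_mx_in_G i s : s != 0 -> graphmx (code_mx i s) \in G A i.
Proof.
move=> nz_s; rewrite inE; apply/and5P; split.
- by rewrite /is_plane /is_subspace /graphmx genmx_id eqxx rank_graphmx.
- apply/forallP => v; apply/implyP => /sub_graphmx ->.
  rewrite /qform mul_mx_row row_mxKl row_mxKr mulmx1 -(mulmxA (rsubmx v)) code_mxK.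
  by rewrite crossmx_alt.
- by rewrite /same_class pi1_graphmx rank_graphmx_cap subr0 rank_code_mx.
- rewrite pi1_graphmx; apply/negP => /eqP /graphmx_inj code0.
  by move: (rank_code_mx i nz_s); rewrite code0 mxrank0.
- exact/eqP/graphmx_cap_Yzero.
Qed.

Lemma G_code_mx i U : U \in G A i -> exists2 s, s != 0 & U = graphmx (code_mx i s).
Proof.
rewrite inE => /and5P [/andP [/eqP eqU /eqP rU] onQ _ neq_pi1 /eqP capU].
have [M UM] := graphmxP eqU rU capU; subst U.
have altMA : forall y : 'rV[F]_3, (y *m (M *m A ^+ i) *m y^T) 0 0 = 0.
  move=> y; move/forallP/(_ (y *m row_mx M 1%:M))/implyP: onQ.
  rewrite /graphmx genmxE submxMl => /(_ isT) /eqP.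
  by rewrite /qform mul_mx_row row_mxKl row_mxKr mulmx1 !mulmxA.
have eqMA := alternating_crossmx altMA; set s := vec3 _ _ _ in eqMA.
have eqM : M = code_mx i s.
  by rewrite /code_mx -eqMA -mulmxA mulmxV ?mulmx1 // unitrX ?singer_unit.
exists s; last by rewrite eqM.
apply: contra neq_pi1 => /eqP s0.
by rewrite eqM s0 /code_mx crossmx0 mul0mx pi1_graphmx.
Qed.

Lemma code_imset : code A =
  [set graphmx (code_mx p.1 p.2) | p : 'I_n * 'rV[F]_3 in setX setT [set~ 0]].
Proof.
apply/setP => U; apply/bigcupP/imsetP => [[i _ /G_code_mx [s nz_s ->]] | [[i s]]].
  by exists (i, s); rewrite // !inE.
by rewrite !inE /= => nz_s ->; exists i => //; apply: code_mx_in_G.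
Qed.

Lemma code_mx_cap (i j : 'I_n) s t : s != 0 -> t != 0 -> (i, s) != (j, t) ->
  (\rank (graphmx (code_mx i s) :&: graphmx (code_mx j t))%MS <= 1)%N.
Proof.
move=> nz_s nz_t neq; have := code_mx_sub_rank nz_s nz_t neq.
by rewrite rank_graphmx_cap; set r := \rank _; lia.
Qed.

Lemma graphmx_code_mx_inj :
  {in setX setT [set~ 0] &, injective (fun p : 'I_n * 'rV[F]_3 => graphmx (code_mx p.1 p.2))}.
Proof.
move=> [i s] [j t]; rewrite !inE /= => nz_s nz_t eq_code.
apply/eqP/contraT => neq; have := code_mx_cap nz_s nz_t neq.
by rewrite eq_code (capmx_idPl (submx_refl _)) rank_graphmx.
Qed.

End SingerCycle.

Theorem theorem4p7 (F : finFieldType) (A : 'M[F]_3) :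
  singer_cycle A ->
  #|code A| = ((#|F| ^ 3 - 1) * (#|F| ^ 2 + #|F| + 1))%N /\
  (forall U V, U \in code A -> V \in code A -> U != V ->
     (\rank (U :&: V)%MS <= 1)%N).
Proof.
move=> singerA; rewrite (code_imset singerA); split.
  rewrite card_in_imset; last exact: graphmx_code_mx_inj.
  by rewrite cardsX cardsT card_ord cardsC1 card_mx mul1n mulnC subn1.
move=> _ _ /imsetP [[i s] /[!inE] /andP [_ nz_s] ->] /imsetP [[j t] /[!inE] /andP [_ nz_t] ->] neq.
by apply: code_mx_cap => //; apply: contra neq => /eqP [-> ->].
Qed.
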